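(* Let $X$ be a distance-regular graph of diameter $d\geq 2$ on $n$ vertices with degree $k$, $\lambda=a_1$, $\mu=c_2$, and put $r=(n-1)/k$. Then $$\min(\lambda,\mu)<k\left(1+\min\left(\frac{r-1}{d-1},\left(\frac{r}{d}\right)^{\frac{1}{d-1}}\right)\right)^{-1}\quad\text{and}\quad \mu<k\max\left(\frac{d-1}{r-1},\left(\frac{d}{r}\right)^{\frac{1}{d-1}}\right).$$
   Context: A connected graph $X$ of diameter $d$ is distance-regular if there are integers $a_i,b_i,c_i$ ($0\le i\le d$) such that for all vertices $v,w$ with $\mathrm{dist}(v,w)=i$, $w$ has exactly $c_i$ neighbours at distance $i-1$, $a_i$ at distance $i$, $b_i$ at distance $i+1$ from $v$; $X$ is $k$-regular with $k=b_0$; $\lambda=a_1$, $\mu=c_2$. *)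

From mathcomp Require Import all_boot.
From Stdlib Require Import Reals.
Set Implicit Arguments. Unset Strict Implicit. Unset Printing Implicit Defensive.

Fixpoint ball (T : finType) (e : rel T) (i : nat) (v : T) : {set T} :=
  match i with
  | 0 => [set v]
  | i'.+1 => let B := ball e i' v in B :|: [set y | [exists x in B, e x y]]
  end.

(* graph distance: least i with w in ball i v (searched in 0..#|T|-1, which
   suffices in a connected graph) *)
Definition gdist (T : finType) (e : rel T) (v w : T) : nat :=
  find (fun i => w \in ball e i v) (iota 0 #|T|).

Definition distance_regular (T : finType) (e : rel T) (d : nat)
    (a b c : nat -> nat) : Prop :=
  (forall v w : T, connect e v w) /\
  (exists v w : T, gdist e v w = d) /\
  (forall v w : T, gdist e v w <= d) /\
  (forall v w : T,
     let i := gdist e v w in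
     [/\ #|[set x | e w x & (gdist e v x).+1 == i]| = c i,
         #|[set x | e w x & gdist e v x == i]| = a i &
         #|[set x | e w x & gdist e v x == i.+1]| = b i]).

(* Fix a vertex v and let k_i be the number of vertices at distance i from v.
   Counting the edges between two consecutive spheres gives
   k_i b_i = k_(i+1) c_(i+1), and b_i <= b_1, c_i >= mu, so the spheres grow
   at most geometrically: k_(i+1) <= k (b_1 / mu)^i.  Summing over the d
   spheres bounds r = (n - 1) / k in terms of rho = b_1 / mu, which gives
   min ((r - 1) / (d - 1), (r / d)^(1/(d-1))) <= rho, and, since b_1 < k,
   (r / d)^(1/(d-1)) < k / mu.  Both inequalities follow, the first one from
   b_1 + lambda < k, i.e. from c_1 = 1 in k = c_1 + a_1 + b_1. *)

From mathcomp Require Import all_boot zify.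
From Stdlib Require Import Reals Lra.
(* Reals rebinds [^] on nat to Nat.pow; restore ssrnat's expn. *)
From mathcomp Require Import ssrnat.
Set Implicit Arguments. Unset Strict Implicit.

Section Distance.
Variables (T : finType) (e : rel T).

Lemma ball_subS i v y : y \in ball e i v -> y \in ball e i.+1 v.
Proof. by rewrite /= inE => ->. Qed.

Lemma ball_edge w x i y : e w x -> y \in ball e i x -> y \in ball e i.+1 w.
Proof.
move=> ewx; elim: i y => [|i IHi] y.
  by rewrite !inE => /eqP->; apply/orP; right; apply/existsP; exists w; rewrite inE eqxx.
rewrite /= inE => /orP[/IHi/ball_subS //|].
rewrite inE => /existsP[z /andP[zin ezy]].
by rewrite /= !inE; apply/orP; right; apply/existsP; exists z; rewrite IHi.
Qed.

Lemma ball_sym i v w : symmetric e -> w \in ball e i v -> v \in ball e i w.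
Proof.
move=> e_sym; elim: i w => [|i IHi] w; first by rewrite !inE => /eqP->.
rewrite /= inE => /orP[/IHi/ball_subS //|].
rewrite inE => /existsP[z /andP[zin ezw]].
by apply: (@ball_edge w z); [rewrite e_sym | apply: IHi].
Qed.

Lemma last_in_ball v p : path e v p -> last v p \in ball e (size p) v.
Proof.
elim: p v => [|x p IHp] v /=; first by rewrite inE.
by case/andP=> evx /IHp; apply: ball_edge.
Qed.

Lemma gdist_ball v w : connect e v w -> w \in ball e (gdist e v w) v.
Proof.
case/connectP=> p /shortenP[p' e_p' uniq_p' _] ->.
have size_p' : size p' < #|T|.
  by move/card_uniqP: uniq_p' => /= <-; apply: max_card.
have in_ball : has (fun i => last v p' \in ball e i v) (iota 0 #|T|).
  by apply/hasP; exists (size p'); [rewrite mem_iota | apply: last_in_ball].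
have := nth_find 0 in_ball; rewrite nth_iota //.
by move: in_ball; rewrite has_find size_iota.
Qed.

Lemma gdist_le v w i : w \in ball e i v -> gdist e v w <= i.
Proof.
move=> w_in; case: (ltnP i #|T|) => [lt_iT|le_Ti].
  by rewrite leqNgt; apply/negP => /(before_find 0); rewrite nth_iota // w_in.
by apply: leq_trans le_Ti; rewrite -(size_iota 0 #|T|) find_size.
Qed.

Lemma gdistxx v : gdist e v v = 0.
Proof. by apply/eqP; rewrite -leqn0 gdist_le // inE. Qed.

Lemma gdist_edge v w x : connect e v w -> e w x -> gdist e v x <= (gdist e v w).+1.
Proof.
move=> cvw ewx; apply: gdist_le; rewrite /= !inE; apply/orP; right.
by apply/existsP; exists w; rewrite ewx gdist_ball.
Qed.

Hypothesis e_sym : symmetric e.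
Hypothesis e_conn : forall v w : T, connect e v w.

Lemma gdistC v w : gdist e v w = gdist e w v.
Proof. by apply/eqP; rewrite eqn_leq !gdist_le // ball_sym // gdist_ball. Qed.

Lemma gdist_eq0 v w : gdist e v w = 0 -> w = v.
Proof. by move=> d0; have := gdist_ball (e_conn v w); rewrite d0 inE => /eqP. Qed.

Lemma gdist_predecessor v w j :
  gdist e v w = j.+1 -> exists2 x, e x w & gdist e v x = j.
Proof.
move=> dvw; have := gdist_ball (e_conn v w); rewrite dvw /= inE => /orP[|].
  by move/gdist_le; rewrite dvw ltnn.
rewrite inE => /existsP[x /andP[x_in exw]]; exists x => //.
by have := gdist_le x_in; have := gdist_edge (e_conn v x) exw; lia.
Qed.

Lemma gdist_adj w x : irreflexive e -> e w x -> gdist e w x = 1.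
Proof.
move=> e_irr ewx; have := gdist_edge (e_conn w w) ewx; rewrite gdistxx.
case dwx: (gdist e w x) => [|[|]] // _.
by move: ewx; rewrite (gdist_eq0 dwx) e_irr.
Qed.

Lemma gdist_eq1 v w : gdist e v w = 1 -> e v w.
Proof. by case/gdist_predecessor => x exw /gdist_eq0 <-. Qed.

Lemma gdist_intermediate v w i : i <= gdist e v w -> exists u, gdist e v u = i.
Proof.
move dvw: (gdist e v w) => j; elim: j w dvw => [|j IHj] w dvw.
  by rewrite leqn0 => /eqP->; exists w.
rewrite leq_eqVlt => /orP[/eqP->|]; first by exists w.
by have [x _ /IHj] := gdist_predecessor dvw; apply.
Qed.

End Distance.

Lemma sum_boolE (T : finType) (P Q : pred T) :
  \sum_(z | P z) (Q z : nat) = #|[set z | P z & Q z]|.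
Proof.
rewrite -sum1dep_card big_mkcondr /=; apply: eq_bigr => z _.
by case: (Q z).
Qed.

Definition sphere (T : finType) (e : rel T) (v : T) (i : nat) : {set T} :=
  [set w | gdist e v w == i].

Section DistanceRegular.
Variables (T : finType) (e : rel T) (d : nat) (a b c : nat -> nat).
Hypotheses (e_sym : symmetric e) (e_irr : irreflexive e).
Hypothesis e_dr : distance_regular e d a b c.

Lemma dr_connected v w : connect e v w.
Proof. by case: e_dr. Qed.

Lemma dr_gdist_le v w : gdist e v w <= d.
Proof. by case: e_dr => _ [_ []]. Qed.

Lemma dr_exists_gdist i : i <= d -> exists v w, gdist e v w = i.
Proof.
case: e_dr => _ [[v [w dvw]] _]; rewrite -dvw => le_id; exists v.
exact: gdist_intermediate dr_connected _ _ _ le_id.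
Qed.

Lemma card_nbr_down v w i :
  gdist e v w = i -> #|[set x | e w x & (gdist e v x).+1 == i]| = c i.
Proof. by case: e_dr => _ [_ [_ dr]] <-; have [] := dr v w. Qed.

Lemma card_nbr_level v w i :
  gdist e v w = i -> #|[set x | e w x & gdist e v x == i]| = a i.
Proof. by case: e_dr => _ [_ [_ dr]] <-; have [] := dr v w. Qed.

Lemma card_nbr_up v w i :
  gdist e v w = i -> #|[set x | e w x & gdist e v x == i.+1]| = b i.
Proof. by case: e_dr => _ [_ [_ dr]] <-; have [] := dr v w. Qed.

Lemma dr_degree w : #|[set x | e w x]| = b 0.
Proof.
rewrite -(card_nbr_up (gdistxx e w)); apply: eq_card => x; rewrite !inE.
by case ewx: (e w x); rewrite //= gdist_adj //; apply: dr_connected.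
Qed.

Lemma intersection_numbers_sum v w :
  let i := gdist e v w in c i + a i + b i = b 0.
Proof.
move=> i; rewrite -(card_nbr_down (erefl i)) -(card_nbr_level (erefl i)).
rewrite -(card_nbr_up (erefl i)) -(dr_degree w) -!sum_boolE -!big_split -sum1dep_card /=.
apply: eq_bigr => x ewx.
have := gdist_edge (dr_connected v w) ewx.
have := gdist_edge (dr_connected v x) (_ : e x w); rewrite e_sym => /(_ ewx).
rewrite -/i; lia.
Qed.

Let dr_gdistC v w : gdist e v w = gdist e w v.
Proof. exact: gdistC e_sym dr_connected v w. Qed.

Lemma gdist_successor v w j :
  gdist e v w = j.+1 -> exists2 x, e v x & gdist e x w = j.
Proof.
rewrite dr_gdistC => /(gdist_predecessor dr_connected)[x exv dwx].
by exists x; [rewrite e_sym | rewrite dr_gdistC].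
Qed.

Lemma b_nonincreasing v w j : gdist e v w = j.+1 -> b j.+1 <= b j.
Proof.
move=> dvw; have [x evx dxw] := gdist_successor dvw.
rewrite -(card_nbr_up dvw) -(card_nbr_up dxw); apply/subset_leq_card/subsetP => z.
rewrite !inE => /andP[ewz /eqP dvz]; rewrite ewz /=.
have := gdist_edge (dr_connected x w) ewz.
have := gdist_edge (dr_connected z x) (_ : e x v); rewrite e_sym => /(_ evx).
rewrite (dr_gdistC z v) (dr_gdistC z x) dxw dvz; lia.
Qed.

Lemma c_nondecreasing v w j : gdist e v w = j.+1 -> c j <= c j.+1.
Proof.
move=> dvw; have [x evx dxw] := gdist_successor dvw.
rewrite -(card_nbr_down dvw) -(card_nbr_down dxw); apply/subset_leq_card/subsetP => z.
rewrite !inE => /andP[ewz /eqP dxz]; rewrite ewz /=.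
have := gdist_edge (dr_connected v z) (_ : e z w); rewrite e_sym => /(_ ewz).
have := gdist_edge (dr_connected z x) (_ : e x v); rewrite e_sym => /(_ evx).
rewrite (dr_gdistC z v) (dr_gdistC z x) dvw; lia.
Qed.

Lemma b_le_b1 v w : 0 < gdist e v w -> b (gdist e v w) <= b 1.
Proof.
move dvw: (gdist e v w) => j; elim: j w dvw => [|[|j] IHj] w dvw // _.
have [x _ dvx] := gdist_predecessor dr_connected dvw.
exact: leq_trans (b_nonincreasing dvw) (IHj x dvx isT).
Qed.

Lemma c2_le_c v w : 1 < gdist e v w -> c 2 <= c (gdist e v w).
Proof.
move dvw: (gdist e v w) => j; elim: j w dvw => [|[|[|j]] IHj] w dvw // _.
have [x _ dvx] := gdist_predecessor dr_connected dvw.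
exact: leq_trans (IHj x dvx isT) (c_nondecreasing dvw).
Qed.

Lemma card_sphere0 v : #|sphere e v 0| = 1.
Proof.
rewrite -(cards1 v); apply: eq_card => w; rewrite !inE.
by apply/eqP/eqP => [/(gdist_eq0 dr_connected) | ->]; last exact: gdistxx.
Qed.

Lemma card_sphere1 v : #|sphere e v 1| = b 0.
Proof.
rewrite -(dr_degree v); apply: eq_card => w; rewrite !inE.
apply/eqP/idP => [|evw]; first exact: (gdist_eq1 dr_connected).
exact: (gdist_adj dr_connected e_irr evw).
Qed.

Lemma card_sphere_rec v i : #|sphere e v i| * b i = #|sphere e v i.+1| * c i.+1.
Proof.
have up : \sum_(w in sphere e v i) \sum_(z in sphere e v i.+1) (e w z : nat)
          = #|sphere e v i| * b i.
  rewrite -sum_nat_const; apply: eq_bigr => w; rewrite inE => /eqP dvw.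
  by rewrite sum_boolE -(card_nbr_up dvw); apply: eq_card => z; rewrite !inE andbC.
have down : \sum_(z in sphere e v i.+1) \sum_(w in sphere e v i) (e w z : nat)
            = #|sphere e v i.+1| * c i.+1.
  rewrite -sum_nat_const; apply: eq_bigr => z; rewrite inE => /eqP dvz.
  rewrite sum_boolE -(card_nbr_down dvz); apply: eq_card => w.
  by rewrite !inE e_sym eqSS andbC.
by rewrite -up -down; apply: exchange_big.
Qed.

Lemma card_sphere_partition v : #|T| = \sum_(i < d.+1) #|sphere e v i|.
Proof.
rewrite -sum1_card (partition_big (fun w => inord (gdist e v w) : 'I_d.+1) xpredT) //=.
apply: eq_bigr => i _; rewrite sum1dep_card; apply: eq_card => w.
by rewrite !inE -val_eqE /= inordK // ltnS dr_gdist_le.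
Qed.

Lemma sphere_ratio v i : #|sphere e v i.+2| * c 2 <= #|sphere e v i.+1| * b 1.
Proof.
have [->|] := posnP #|sphere e v i.+2|; first by [].
rewrite card_gt0 => /set0Pn[w]; rewrite inE => /eqP dvw.
have [x _ dvx] := gdist_predecessor dr_connected dvw.
have c_ge : c 2 <= c i.+2 by rewrite -dvw c2_le_c ?dvw.
have b_le : b i.+1 <= b 1 by rewrite -dvx b_le_b1 ?dvx.
apply: leq_trans (leq_mul (leqnn _) c_ge) _.
by rewrite -card_sphere_rec leq_mul2l b_le orbT.
Qed.

Lemma c2_pos : 2 <= d -> 0 < c 2.
Proof.
move=> le2d; have [v [w dvw]] := dr_exists_gdist le2d.
have [x exw dvx] := gdist_predecessor dr_connected dvw.
rewrite -(card_nbr_down dvw) card_gt0; apply/set0Pn; exists x.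
by rewrite inE e_sym exw dvx.
Qed.

Lemma c2_le_k : 2 <= d -> c 2 <= b 0.
Proof.
move=> le2d; have [v [w dvw]] := dr_exists_gdist le2d.
by have := intersection_numbers_sum v w; rewrite dvw => <-; rewrite -addnA leq_addr.
Qed.

Lemma b1_a1_lt_k : 1 <= d -> b 1 + a 1 < b 0.
Proof.
move=> le1d; have [v [w dvw]] := dr_exists_gdist le1d.
have c1_pos : 0 < c 1.
  rewrite -(card_nbr_down dvw) card_gt0; apply/set0Pn; exists v.
  by rewrite inE gdistxx e_sym (gdist_eq1 dr_connected dvw).
by have := intersection_numbers_sum v w; rewrite dvw => <-; lia.
Qed.

End DistanceRegular.

Lemma leq_exp2rW m n i : m <= n -> m ^ i <= n ^ i.
Proof. by move=> le_mn; elim: i => // i IHi; rewrite !expnS leq_mul. Qed.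

Section GeometricGrowth.
Variables (s : nat -> nat) (k p q : nat).
Hypotheses (s1 : s 1 = k) (s_ratio : forall i, s i.+2 * q <= s i.+1 * p).

Lemma geometric_le i : s i.+1 * q ^ i <= k * p ^ i.
Proof.
elim: i => [|i IHi]; first by rewrite !muln1 s1.
rewrite expnS mulnA; apply: leq_trans (leq_mul (s_ratio i) (leqnn _)) _.
by rewrite mulnAC expnSr mulnA leq_mul2r IHi orbT.
Qed.

Lemma geometric_le_exp M i n :
  q <= M -> p <= M -> i <= n -> s i.+1 * q ^ n <= k * M ^ n.
Proof.
move=> le_qM le_pM le_in; rewrite -(subnKC le_in) !expnD mulnA mulnA.
apply: leq_mul (leq_exp2rW _ le_qM); apply: leq_trans (geometric_le i) _.
by rewrite leq_mul2l leq_exp2rW ?orbT.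
Qed.

Lemma tail_sum_le_ratio d' : p <= q -> 0 < q ->
  (\sum_(j < d') s j.+2) * q <= d' * (k * p).
Proof.
move=> le_pq q_pos; rewrite big_distrl /= -[X in X * _]card_ord -sum_nat_const.
apply: leq_sum => j _; have qj_pos : 0 < q ^ j by rewrite expn_gt0 q_pos.
rewrite -(leq_pmul2r qj_pos) -mulnA -expnS.
apply: leq_trans (geometric_le j.+1) _.
by rewrite expnS mulnA leq_mul2l leq_exp2rW ?orbT.
Qed.

Lemma sum_le_exp_ratio d' : q <= p ->
  (\sum_(i < d'.+1) s i.+1) * q ^ d' <= d'.+1 * (k * p ^ d').
Proof.
move=> le_qp; rewrite big_distrl /= -[X in X * _]card_ord -sum_nat_const.
by apply: leq_sum => i _; apply: geometric_le_exp => //; rewrite -ltnS.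
Qed.

Lemma sum_lt_exp_k d' : p < k -> q <= k -> 0 < d' ->
  (\sum_(i < d'.+1) s i.+1) * q ^ d' < d'.+1 * (k * k ^ d').
Proof.
move=> lt_pk le_qk d'_pos; rewrite big_ord_recr /= mulnDl big_distrl /= mulSnr.
have last_lt : s d'.+1 * q ^ d' < k * k ^ d'.
  apply: leq_ltn_trans (geometric_le d') _.
  by rewrite ltn_mul2l ltn_exp2r // (leq_ltn_trans _ lt_pk).
have rest_le : \sum_(i < d') s i.+1 * q ^ d' <= d' * (k * k ^ d').
  rewrite -[X in X * _]card_ord -sum_nat_const; apply: leq_sum => i _.
  by apply: geometric_le_exp => //; apply: ltnW.
by apply: leq_ltn_trans (leq_add rest_le (leqnn _)) _; rewrite ltn_add2l.
Qed.

End GeometricGrowth.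

Section RealPowers.
Local Open Scope R_scope.

Lemma INR_expn (m n : nat) : INR (m ^ n)%N = INR m ^ n.
Proof. by elim: n => // n IHn; rewrite expnS mult_INR IHn. Qed.

Lemma pow_div_subE (S K D P Q : R) (n : nat) : K <> 0 -> D <> 0 -> Q <> 0 ->
  (P / Q) ^ n - S / K / D = (D * (K * P ^ n) - S * Q ^ n) / (K * D * Q ^ n).
Proof.
move=> K0 D0 Q0; have Qn0 := pow_nonzero Q n Q0.
by rewrite /Rdiv Rpow_mult_distr pow_inv; field.
Qed.

Lemma INR_div_le_pow (S K D P Q n : nat) : (0 < K)%N -> (0 < D)%N -> (0 < Q)%N ->
  (S * Q ^ n <= D * (K * P ^ n))%N -> INR S / INR K / INR D <= (INR P / INR Q) ^ n.
Proof.
move=> /ltP/lt_0_INR K0 /ltP/lt_0_INR D0 /ltP/lt_0_INR Q0 /leP/le_INR.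
rewrite !mult_INR !INR_expn => le_SP.
have : 0 <= (INR P / INR Q) ^ n - INR S / INR K / INR D; last lra.
rewrite pow_div_subE; try lra.
apply: Rle_mult_inv_pos; first lra.
by repeat apply: Rmult_lt_0_compat => //; apply: pow_lt.
Qed.

Lemma INR_div_lt_pow (S K D P Q n : nat) : (0 < K)%N -> (0 < D)%N -> (0 < Q)%N ->
  (S * Q ^ n < D * (K * P ^ n))%N -> INR S / INR K / INR D < (INR P / INR Q) ^ n.
Proof.
move=> /ltP/lt_0_INR K0 /ltP/lt_0_INR D0 /ltP/lt_0_INR Q0 /ltP/lt_INR.
rewrite !mult_INR !INR_expn => lt_SP.
have : 0 < (INR P / INR Q) ^ n - INR S / INR K / INR D; last lra.
rewrite pow_div_subE; try lra.
apply: Rdiv_lt_0_compat; first lra.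
by repeat apply: Rmult_lt_0_compat => //; apply: pow_lt.
Qed.

Lemma Rpower_pow_root (X : R) (n : nat) :
  0 < X -> (0 < n)%N -> Rpower (X ^ n) (1 / INR n) = X.
Proof.
move=> X0 /ltP/lt_0_INR n0.
by rewrite -Rpower_pow // Rpower_mult Rmult_div_assoc Rmult_1_r Rdiv_diag ?Rpower_1 //; lra.
Qed.

Lemma Rpower_Rinv (a y : R) : 0 < a -> Rpower (/ a) y = / Rpower a y.
Proof.
by move=> a0; rewrite -Rpower_Ropp /Rpower ln_Rinv // -Ropp_mult_distr_r Ropp_mult_distr_l.
Qed.

End RealPowers.

Section SphereBounds.
Local Open Scope R_scope.

(* [d'.+1] plays the diameter, [s i] the size of the i-th sphere, [l] lambda. *)
Variables (s : nat -> nat) (k l p q d' : nat).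
Hypotheses (s1 : s 1 = k) (s_ratio : forall i, (s i.+2 * q <= s i.+1 * p)%N).
Hypotheses (q_pos : (0 < q)%N) (le_qk : (q <= k)%N) (lt_plk : (p + l < k)%N).
Hypothesis d'_pos : (0 < d')%N.

Let r := INR (\sum_(i < d'.+1) s i.+1) / INR k.

Let k_pos : (0 < k)%N. Proof. lia. Qed.

Let INR_k_gt0 : 0 < INR k. Proof. exact/lt_0_INR/ltP. Qed.
Let INR_q_gt0 : 0 < INR q. Proof. exact/lt_0_INR/ltP. Qed.
Let INR_d'_gt0 : 0 < INR d'. Proof. exact/lt_0_INR/ltP. Qed.

Let sum_reclE : (\sum_(i < d'.+1) s i.+1 = k + \sum_(j < d') s j.+2)%N.
Proof. by rewrite big_ord_recl s1. Qed.

Let r_sub1E : r - 1 = INR (\sum_(j < d') s j.+2) / INR k.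
Proof. by rewrite /r sum_reclE plus_INR; field; lra. Qed.

Let r_ge1 : 1 <= r.
Proof.
have : 0 <= r - 1 by rewrite r_sub1E; apply: Rle_mult_inv_pos => //; apply: pos_INR.
lra.
Qed.

Let r_div_gt0 : 0 < r / INR d'.+1.
Proof. by apply: Rdiv_lt_0_compat; [lra | apply/lt_0_INR/ltP]. Qed.

Lemma spheres_root_le_ratio :
  Rmin ((r - 1) / INR d') (Rpower (r / INR d'.+1) (1 / INR d')) <= INR p / INR q.
Proof.
case: (leqP p q) => [le_pq | lt_qp].
  apply: Rle_trans (Rmin_l _ _) _.
  rewrite r_sub1E -(pow_1 (INR p / INR q)); apply: INR_div_le_pow => //.
  by rewrite !expn1 tail_sum_le_ratio.
apply: Rle_trans (Rmin_r _ _) _.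
have pq_gt0 : 0 < INR p / INR q by apply/Rdiv_lt_0_compat/INR_q_gt0/lt_0_INR/ltP; lia.
rewrite -(Rpower_pow_root pq_gt0 d'_pos); apply: Rle_Rpower_l.
  by apply: Rle_mult_inv_pos; lra.
split=> //; apply: INR_div_le_pow => //.
exact: sum_le_exp_ratio (ltnW lt_qp).
Qed.

Lemma spheres_root_lt_ratio : Rpower (r / INR d'.+1) (1 / INR d') < INR k / INR q.
Proof.
have kq_gt0 : 0 < INR k / INR q by apply: Rdiv_lt_0_compat.
rewrite -(Rpower_pow_root kq_gt0 d'_pos); apply: Rlt_Rpower_l.
  by apply: Rdiv_lt_0_compat; lra.
split=> //; apply: INR_div_lt_pow => //.
by apply: sum_lt_exp_k => //; lia.
Qed.

Lemma lambda_mu_bound :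
  Rmin (INR l) (INR q) <
  INR k * / (1 + Rmin ((r - 1) / INR d') (Rpower (r / INR d'.+1) (1 / INR d'))).
Proof.
have root_le := spheres_root_le_ratio.
set R0 := Rmin _ _ in root_le *; set m := Rmin _ _.
have R0_ge0 : 0 <= R0.
  apply: Rmin_glb; last exact/Rlt_le/exp_pos.
  by apply: Rle_mult_inv_pos; lra.
have m_ge0 : 0 <= m by apply: Rmin_glb; apply: pos_INR.
have mR0_le_p : m * R0 <= INR p.
  apply: Rle_trans (Rmult_le_compat _ _ _ _ m_ge0 R0_ge0 (Rmin_r _ _) root_le) _.
  by apply: Req_le; field; lra.
have plk : INR p + INR l + 1 <= INR k.
  by rewrite -[1]/(INR 1) -!plus_INR; apply: le_INR; lia.
apply: (Rmult_lt_reg_r (1 + R0)); first lra.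
rewrite Rmult_assoc Rinv_l ?Rmult_1_r; last lra.
by have := Rmin_l (INR l) (INR q); rewrite -/m; lra.
Qed.

Lemma mu_bound :
  INR q < INR k * Rmax (INR d' / (r - 1)) (Rpower (INR d'.+1 / r) (1 / INR d')).
Proof.
apply: Rlt_le_trans (Rmult_le_compat_l _ _ _ (Rlt_le _ _ INR_k_gt0) (Rmax_r _ _)).
rewrite -Rinv_div Rpower_Rinv //.
have root_lt := spheres_root_lt_ratio.
set Y := Rpower _ _ in root_lt *.
have Y_gt0 : 0 < Y by apply: exp_pos.
apply: (Rmult_lt_reg_r Y) => //.
rewrite Rmult_assoc Rinv_l ?Rmult_1_r; last lra.
apply: Rlt_le_trans (Rmult_lt_compat_l _ _ _ INR_q_gt0 root_lt) _.
by apply: Req_le; field; lra.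
Qed.

End SphereBounds.

Theorem lemma4p4 (T : finType) (e : rel T) (d : nat) (a b c : nat -> nat) :
  symmetric e -> irreflexive e -> distance_regular e d a b c -> 2 <= d ->
  let n := INR #|T| in
  let k := INR (b 0) in
  let lam := INR (a 1) in
  let mu := INR (c 2) in
  let r := ((n - 1) / k)%R in
  let dR := INR d in
  (Rmin lam mu < k * / (1 + Rmin ((r - 1) / (dR - 1))
                                   (Rpower (r / dR) (1 / (dR - 1)))))%R /\
  (mu < k * Rmax ((dR - 1) / (r - 1)) (Rpower (dR / r) (1 / (dR - 1))))%R.
Proof.
move=> e_sym e_irr e_dr le2d; cbv zeta.
have [v _] := dr_exists_gdist e_dr (leq0n d).
pose s i := #|sphere e v i|.
have s1 : s 1 = b 0 := card_sphere1 e_irr e_dr v.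
have s_ratio : forall i, s i.+2 * c 2 <= s i.+1 * b 1 := sphere_ratio e_sym e_dr v.
have card_T : #|T| = 1 + \sum_(i < d) s i.+1.
  by rewrite (card_sphere_partition e_dr v) big_ord_recl (card_sphere0 e_dr).
have q_pos := c2_pos e_sym e_dr le2d.
have le_qk := c2_le_k e_sym e_irr e_dr le2d.
have lt_plk := b1_a1_lt_k e_sym e_irr e_dr (ltnW le2d).
case: d le2d {e_dr} card_T => [|d'] // le2d card_T.
have -> : (INR #|T| - 1 = INR (\sum_(i < d'.+1) s i.+1))%R.
  by rewrite card_T plus_INR /=; lra.
have -> : (INR d'.+1 - 1 = INR d')%R by rewrite S_INR; lra.
split; first exact: lambda_mu_bound s1 s_ratio q_pos le_qk lt_plk le2d.
exact: mu_bound s1 s_ratio q_pos le_qk lt_plk le2d.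
Qed.
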